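(* Fix $x\in\mathbf{X}\cup\mathbf{X}^+$. (i) Suppose $H_{TP^+}(x)\le\delta$, and define OOD detectors by $\mathbf{P}'_k(x\in\mathbf{X}_k\mid D)=\mathbf{P}(x\in\mathbf{X}_k\mid D)$, $k=1,\dots,T$. Then $H_{OOD^+,k}(x)\le\delta$ for all $k=1,\dots,T$. (ii) Suppose OOD detectors satisfy $H_{OOD^+,k}(x)\le\delta_k$ for $k=1,\dots,T$, and define the open-world task-id prediction by $$\mathbf{P}(x\in\mathbf{X}_k\mid D)=\frac{\mathbf{P}'_k(x\in\mathbf{X}_k\mid D)}{\sum_{k'}\mathbf{P}'_{k'}(x\in\mathbf{X}_{k'}\mid D)+\prod_{k'}(1-\mathbf{P}'_{k'}(x\in\mathbf{X}_{k'}\mid D))},\qquad \mathbf{P}(x\in\mathbf{X}^+\mid D)=\frac{\prod_{k'}(1-\mathbf{P}'_{k'}(x\in\mathbf{X}_{k'}\mid D))}{\sum_{k'}\mathbf{P}'_{k'}(x\in\mathbf{X}_{k'}\mid D)+\prod_{k'}(1-\mathbf{P}'_{k'}(x\in\mathbf{X}_{k'}\mid D))}.$$ Then $$H_{TP^+}(x)\le\max\Big(\big(\textstyle\sum_k\mathbf{1}_{x\in\mathbf{X}_k}e^{\delta_k}\big)\big(\sum_k(1+\mathbf{1}_{x\in\mathbf{X}_k})(1-e^{-\delta_k})\big),\ \prod_k e^{\delta_k}\sum_k(1-e^{-\delta_k})\Big),$$ where $\mathbf{1}_{x\in\mathbf{X}_k}$ is the indicator of $x\in\mathbf{X}_k$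.
   Context: Open-world setting. $\mathbf{X}$ is the disjoint union of task domains $\mathbf{X}_1,\dots,\mathbf{X}_T$, and $\mathbf{X}^+$ is an open-world OOD domain disjoint from $\mathbf{X}$. $D$ is a fixed conditioning event. An open-world task-id prediction (TP$^+$) is a probability distribution over the $T+1$ outcomes $\{\mathbf{P}(x\in\mathbf{X}_k\mid D)\}_{k=1}^T\cup\{\mathbf{P}(x\in\mathbf{X}^+\mid D)\}$ (nonnegative, summing to $1$), with $H_{TP^+}(x)=-\log\mathbf{P}(x\in\mathbf{X}_{k_0}\mid D)$ if $x\in\mathbf{X}_{k_0}$ and $H_{TP^+}(x)=-\log\mathbf{P}(x\in\mathbf{X}^+\mid D)$ if $x\in\mathbf{X}^+$. An OOD detector for task $k$ is a value $\mathbf{P}'_k(x\in\mathbf{X}_k\mid D)\in[0,1]$ with $\mathbf{P}'_k(x\in(\mathbf{X}\cup\mathbf{X}^+)\setminus\mathbf{X}_k\mid D)=1-\mathbf{P}'_k(x\in\mathbf{X}_k\mid D)$; its open-world cross-entropy is $H_{OOD^+,k}(x)=-\log\mathbf{P}'_k(x\in\mathbf{X}_k\mid D)$ if $x\in\mathbf{X}_k$ and $H_{OOD^+,k}(x)=-\log\mathbf{P}'_k(x\in(\mathbf{X}\cup\mathbf{X}^+)\setminus\mathbf{X}_k\mid D)$ if $x\in(\mathbf{X}\cup\mathbf{X}^+)\setminus\mathbf{X}_k$. *)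

From HB Require Import structures.
From mathcomp Require Import all_boot all_order all_algebra.
From mathcomp Require Import reals ereal.
From mathcomp Require Import sequences exp.
Set Implicit Arguments. Unset Strict Implicit. Unset Printing Implicit Defensive.
Import Order.TTheory GRing.Theory Num.Theory.
Local Open Scope ring_scope.

(* Location of the fixed input x in X ∪ X^+ :
   [Some k] means x ∈ X_k (task k, 0-indexed), [None] means x ∈ X^+.
   Since X_1,...,X_T, X^+ are pairwise disjoint, this is exactly one outcome. *)

Definition nlog (R : realType) (p : R) : \bar R :=
  if 0 < p then (- ln p)%:E else +oo%E.

Definition is_TP (R : realType) (T : nat) (P : option 'I_T -> R) : Prop :=
  (forall o, 0 <= P o) /\ \sum_(o : option 'I_T) P o = 1.

Definition H_TP (R : realType) (T : nat) (P : option 'I_T -> R)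
  (loc : option 'I_T) : \bar R := nlog (P loc).

(* OOD detectors: q k = P'_k(x ∈ X_k | D) ∈ [0,1];
   H_{OOD^+,k}(x) *)
Definition is_OOD (R : realType) (T : nat) (q : 'I_T -> R) : Prop :=
  forall k, 0 <= q k <= 1.

Definition H_OOD (R : realType) (T : nat) (q : 'I_T -> R) (k : 'I_T)
  (loc : option 'I_T) : \bar R :=
  if loc == Some k then nlog (q k) else nlog (1 - q k).

Definition TP_of_OOD (R : realType) (T : nat) (q : 'I_T -> R) :
    option 'I_T -> R :=
  fun o =>
    let den := \sum_(k < T) q k + \prod_(k < T) (1 - q k) in
    match o with
    | Some k => q k / den
    | None => (\prod_(k < T) (1 - q k)) / den
    end.

Definition ind (R : realType) (T : nat) (loc : option 'I_T) (k : 'I_T) : R :=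
  (loc == Some k)%:R.

From HB Require Import structures.
From mathcomp Require Import all_boot all_order all_algebra.
From mathcomp Require Import reals ereal.
From mathcomp Require Import sequences exp.
Import Order.TTheory GRing.Theory Num.Theory.
Local Open Scope ring_scope.

(* (i): a distribution gives any outcome at most 1 minus the mass of any other
   outcome, so each detector P'_k := P(X_k) puts at least P(true outcome) on
   the true side, and -log is antitone.
   (ii): the constructed prediction of the true outcome has the form a / (a + b)
   and -log (a / (a + b)) = ln (1 + b / a) <= b / a.  The detector bounds give
   exp (-delta_k) <= mass of the true side of detector k, which bounds 1 / a by
   exp delta_{k0} (resp. by prod_k exp delta_k when x is OOD) and b by
   sum_k (1 - exp (-delta_k)). *)

Section NegativeLog.
Context {R : realType}.
Implicit Types a b p d : R.

Lemma nlog_le_nlog a b : a <= b -> (nlog b <= nlog a)%E.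
Proof.
rewrite {2}/nlog => ab; case: ifPn => [a0|_]; last exact: leey.
have b0 := lt_le_trans a0 ab.
by rewrite /nlog b0 lee_fin lerN2 ler_ln ?posrE.
Qed.

Lemma nlog_le_expRN p d : (nlog p <= d%:E)%E -> expR (- d) <= p.
Proof.
rewrite /nlog; case: ifPn => // p0; rewrite lee_fin => lnp.
by rewrite -(lnK p0) ler_expR lerNl.
Qed.

Lemma nlog_ratio_le a b : 0 < a -> 0 <= b -> (nlog (a / (a + b)) <= (b / a)%:E)%E.
Proof.
move=> a0 b0; have ab0 : 0 < a + b by rewrite ltr_wpDr.
rewrite /nlog divr_gt0 // lee_fin -lnV ?posrE ?divr_gt0 // invf_div.
rewrite mulrDl divff ?gt_eqF //; apply: le_ln1Dx.
exact: lt_le_trans (ltrN10 _) (divr_ge0 b0 (ltW a0)).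
Qed.

End NegativeLog.

Section TaskPrediction.
Context {R : realType} {T : nat}.

Lemma is_TP_le_1_sub (P : option 'I_T -> R) o o' :
  is_TP P -> o != o' -> P o <= 1 - P o'.
Proof.
move=> [P_ge0 P_sum1] oo'; have o'o : o' != o by rewrite eq_sym.
rewrite -P_sum1 (bigD1 o') //= (bigD1 o) //= addrAC subrr add0r.
by rewrite lerDl sumr_ge0.
Qed.

Lemma H_OOD_le_H_TP (P : option 'I_T -> R) k loc :
  is_TP P -> (H_OOD (fun k => P (Some k)) k loc <= H_TP P loc)%E.
Proof.
rewrite /H_OOD /H_TP => P_TP; case: eqP => [-> //|loc_k].
by apply/nlog_le_nlog/is_TP_le_1_sub => //; apply/eqP.
Qed.

Lemma sum_ind_Some (k0 : 'I_T) (F : 'I_T -> R) :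
  \sum_(k < T) ind R (Some k0) k * F k = F k0.
Proof.
rewrite (bigD1 k0) //= big1 => [|k /negbTE k0k]; first by rewrite /ind eqxx mul1r addr0.
by rewrite /ind (inj_eq Some_inj) eq_sym k0k mul0r.
Qed.

End TaskPrediction.

Section TPofOOD.
Context {R : realType} {T : nat} {q delta : 'I_T -> R}.
Hypothesis q_OOD : is_OOD q.

Let q_ge0 k : 0 <= q k. Proof. by case/andP: (q_OOD k). Qed.
Let subq_ge0 k : 0 <= 1 - q k. Proof. by case/andP: (q_OOD k); rewrite subr_ge0. Qed.

Lemma H_TP_of_OOD_None_le :
  (forall k, expR (- delta k) <= 1 - q k) ->
  (H_TP (TP_of_OOD q) None <=
     ((\prod_(k < T) expR (delta k)) * \sum_(k < T) (1 - expR (- delta k)))%:E)%E.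
Proof.
move=> out_le; set m := \prod_(k < T) expR (- delta k).
have m0 : 0 < m by apply: prodr_gt0 => k _; apply: expR_gt0.
have m_le : m <= \prod_(k < T) (1 - q k) by apply: ler_prod => k _; rewrite expR_ge0 out_le.
have prod0 := lt_le_trans m0 m_le.
rewrite /H_TP /TP_of_OOD [X in _ / X]addrC.
apply: le_trans (nlog_ratio_le _ _ prod0 _) _; first exact: sumr_ge0.
rewrite lee_fin.
have -> : \prod_(k < T) expR (delta k) = m^-1.
  by rewrite -prodfV; apply: eq_bigr => k _; rewrite expRN invrK.
rewrite [leRHS]mulrC; apply: ler_pM; rewrite ?sumr_ge0 ?invr_ge0 ?(ltW prod0) //.
  by apply: ler_sum => k _; rewrite lerBrDl -lerBrDr.
by rewrite lef_pV2 ?posrE.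
Qed.

Lemma H_TP_of_OOD_Some_le k0 :
  expR (- delta k0) <= q k0 ->
  (forall k, k != k0 -> expR (- delta k) <= 1 - q k) ->
  (H_TP (TP_of_OOD q) (Some k0) <=
     (expR (delta k0) * \sum_(k < T) (1 - expR (- delta k)))%:E)%E.
Proof.
move=> in_le out_le; have q0 := lt_le_trans (expR_gt0 _) in_le.
rewrite /H_TP /TP_of_OOD (bigD1 k0) // [\prod_(k < T) _](bigD1 k0) //= -addrA.
set rest := \prod_(k | k != k0) (1 - q k).
have rest_ge0 : 0 <= rest by apply: prodr_ge0.
have rest_le1 : rest <= 1.
  by apply: prodr_ile1 => k _; rewrite subq_ge0 lerBlDr lerDl q_ge0.
apply: le_trans (nlog_ratio_le _ _ q0 _) _; first by rewrite addr_ge0 ?sumr_ge0 ?mulr_ge0.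
rewrite lee_fin [leRHS]mulrC; apply: ler_pM;
  rewrite ?addr_ge0 ?sumr_ge0 ?mulr_ge0 ?invr_ge0 ?(ltW q0) //.
  rewrite [leRHS](bigD1 k0) //= [leRHS]addrC; apply: lerD.
    by apply: ler_sum => k /out_le; rewrite lerBrDl -lerBrDr.
  apply: le_trans (_ : _ <= 1 - q k0) _; first by rewrite ler_piMr.
  by rewrite lerD2l lerN2.
by rewrite -[delta k0]opprK expRN lef_pV2 ?posrE ?expR_gt0.
Qed.

End TPofOOD.

Theorem corollary2 (R : realType) (T : nat) (loc : option 'I_T) :
  (forall (P : option 'I_T -> R) (delta : R),
     is_TP P ->
     (H_TP P loc <= delta%:E)%E ->
     forall k : 'I_T, (H_OOD (fun k => P (Some k)) k loc <= delta%:E)%E)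
  /\
  (forall (q : 'I_T -> R) (delta : 'I_T -> R),
     is_OOD q ->
     (forall k : 'I_T, (H_OOD q k loc <= (delta k)%:E)%E) ->
     (H_TP (TP_of_OOD q) loc <=
       (Num.max
          ((\sum_(k < T) ind R loc k * expR (delta k)) *
           (\sum_(k < T) (1 + ind R loc k) * (1 - expR (- delta k))))
          ((\prod_(k < T) expR (delta k)) *
           (\sum_(k < T) (1 - expR (- delta k)))))%:E)%E).
Proof.
split=> [P delta P_TP H_TP_le k|q delta q_OOD H_OOD_le].
  exact: le_trans (H_OOD_le_H_TP P k loc P_TP) H_TP_le.
have out_le k : loc != Some k -> expR (- delta k) <= 1 - q k.
  by move=> /negbTE loc_k; apply: nlog_le_expRN; have := H_OOD_le k; rewrite /H_OOD loc_k.
case: loc H_OOD_le out_le => [k0|] H_OOD_le out_le; last first.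
  apply: le_trans (H_TP_of_OOD_None_le q_OOD (fun k => out_le k isT)) _.
  by rewrite lee_fin le_max lexx orbT.
have in_le : expR (- delta k0) <= q k0.
  by apply: nlog_le_expRN; have := H_OOD_le k0; rewrite /H_OOD eqxx.
have other_le k : k != k0 -> expR (- delta k) <= 1 - q k.
  by move=> k_k0; apply: out_le; rewrite (inj_eq Some_inj) eq_sym.
apply: le_trans (H_TP_of_OOD_Some_le q_OOD k0 in_le other_le) _.
rewrite lee_fin le_max sum_ind_Some ler_pM2l ?expR_gt0 //; apply/orP; left.
under [leRHS]eq_bigr do rewrite mulrDl mul1r.
have [_ q_le1] := andP (q_OOD k0).
rewrite [leRHS]big_split /= sum_ind_Some lerDl subr_ge0.
exact: le_trans in_le q_le1.
Qed.
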